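(* Fix an integer $k\geq1$ and $V=\{0,\ldots,k\}$. Let $\varphi$ be a Boolean function on $V$ with $\#\varphi\neq|\mathrm{eul}(\varphi)|$. Then there exist satisfying valuations $\nu,\nu'$ of $\varphi$ with $(-1)^{|\nu|}\neq(-1)^{|\nu'|}$ and a simple path $\nu=\nu_0-\nu_1-\cdots-\nu_{n+1}=\nu'$ in $\mathbf G_V$ (so $n$ is even) such that $\nu_i\notin\mathrm{sat}(\varphi)$ for all $1\leq i\leq n$.
   Context: A valuation is a subset $\nu\subseteq V$; $\nu^{(l)}$ is $\nu$ with membership of $l$ flipped. A Boolean function on $V$ is a map $\varphi:2^V\to\{\text{false},\text{true}\}$; $\mathrm{sat}(\varphi)$ is its set of satisfying valuations, $\#\varphi=|\mathrm{sat}(\varphi)|$, and $\mathrm{eul}(\varphi)=\sum_{\nu\in\mathrm{sat}(\varphi)}(-1)^{|\nu|}$. $\mathbf G_V$ is the undirected graph with vertex set $2^V$ and edges $\{\nu,\nu^{(l)}\}$ for $\nu\subseteq V$, $l\in V$. *)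

From mathcomp Require Import all_boot all_order all_algebra.
Set Implicit Arguments. Unset Strict Implicit. Unset Printing Implicit Defensive.
Import GRing.Theory Num.Theory.
Local Open Scope ring_scope.

(* Valuations over a finite variable set V are subsets {set V};
   a Boolean function is a map {set V} -> bool. *)

Definition flipv (V : finType) (nu : {set V}) (l : V) : {set V} :=
  if l \in nu then nu :\ l else l |: nu.

Definition Gedge (V : finType) : rel {set V} :=
  fun nu mu => [exists l : V, mu == flipv nu l].

Definition sat (V : finType) (phi : {set V} -> bool) : {set {set V}} :=
  [set nu | phi nu].

Definition nsat (V : finType) (phi : {set V} -> bool) : nat := #|sat phi|.

Definition eul (V : finType) (phi : {set V} -> bool) : int :=
  \sum_(nu in sat phi) (-1) ^+ #|nu|.

From mathcomp Require Import all_boot all_order all_algebra.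
Import GRing.Theory Num.Theory.
Local Open Scope ring_scope.

(* If all satisfying valuations had the same parity, no sign in [eul phi]
   would cancel and [|eul phi| = #phi]; so two satisfying valuations of
   opposite parity exist.  The hypercube G_V is connected, hence a simple path
   joins them.  Along it the parity of consecutive satisfying valuations must
   change somewhere, and the segment between two such consecutive valuations
   has its interior outside sat(phi). *)

Section ChangeSegment.
Variables (T : eqType) (e : rel T) (P : pred T) (R : eqType) (f : T -> R).

Lemma uniq_path_change_segment (s : seq T) (a : T) :
  path e a s -> uniq (a :: s) -> P a -> P (last a s) -> f a != f (last a s) ->
  exists (nu nu' : T) (mid : seq T),
    [/\ P nu /\ P nu', f nu != f nu', path e nu (rcons mid nu'),
        uniq (nu :: rcons mid nu') & all (predC P) mid].
Proof.
have [n] := ubnP (size s); elim: n s a => // n IH s a ltsn pth uq Pa Pl fal.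
have hasPs : has P s.
  case: s {ltsn pth uq} Pl fal => [|y s] Pl fal; first by rewrite eqxx in fal.
  by apply/hasP; exists (last y s) => //; exact: mem_last.
case: (split_find hasPs) ltsn pth uq Pl fal => x s1 s2 Px noP1.
rewrite size_cat size_rcons ltnS last_cat last_rcons => lt_n.
rewrite cat_path last_rcons => /andP[pth1 pth2].
rewrite cat_rcons -cat_cons cat_uniq => /and3P[uq1 disj uq2] Pl fal.
have [fax|fax] := eqVneq (f a) (f x).
  have lt_s2 : (size s2 < n)%N by apply: leq_ltn_trans lt_n; rewrite leq_addl.
  by apply: (IH s2 x) => //; rewrite -fax.
exists a, x, s1; split => //.
- rewrite -cats1 -cat_cons cat_uniq uq1 /= andbT.
  by apply: contra disj; rewrite orbF /= => ->.
- by rewrite (all_predC P).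
Qed.

End ChangeSegment.

Lemma flipvK (V : finType) (nu : {set V}) (l : V) : flipv (flipv nu l) l = nu.
Proof.
rewrite /flipv; have [lnu|lNnu] := boolP (l \in nu).
  by rewrite setD11 setD1K.
by rewrite setU11 setU1K.
Qed.

Lemma Gedge_sym (V : finType) : symmetric (@Gedge V).
Proof.
suff Gedge_flip (nu mu : {set V}) : Gedge nu mu -> Gedge mu nu.
  by move=> nu mu; apply/idP/idP; apply: Gedge_flip.
rewrite /Gedge => /existsP[l /eqP->].
by apply/existsP; exists l; rewrite flipvK.
Qed.

Lemma connect_Gedge_set0 (V : finType) (nu : {set V}) :
  connect (@Gedge V) nu set0.
Proof.
have [n] := ubnP #|nu|; elim: n nu => // n IH nu lt_nu.
have [->|[l lnu]] := set_0Vmem nu; first exact: connect0.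
apply: (connect_trans (y := nu :\ l)).
  by apply: connect1; apply/existsP; exists l; rewrite /flipv lnu.
by apply: IH; rewrite (cardsD1 l nu) lnu in lt_nu.
Qed.

Lemma connect_Gedge (V : finType) (nu mu : {set V}) : connect (@Gedge V) nu mu.
Proof.
apply: (connect_trans (y := set0)); first exact: connect_Gedge_set0.
by rewrite (sym_connect_sym (@Gedge_sym V)); exact: connect_Gedge_set0.
Qed.

Lemma sat_sign_neq (V : finType) (phi : {set V} -> bool) :
  (nsat phi)%:Z != `|eul phi| ->
  exists nu nu' : {set V}, [/\ nu \in sat phi, nu' \in sat phi &
    ((-1) ^+ #|nu| != (-1) ^+ #|nu'| :> int)].
Proof.
rewrite /nsat /eul => neq_nsat_eul.
have [nu0 sat_nu0|sat0] := pickP (mem (sat phi)); last first.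
  by rewrite big_pred0 ?eq_card0 in neq_nsat_eul.
pose sign_change :=
  [pred nu | (nu \in sat phi) && ((-1) ^+ #|nu| != (-1) ^+ #|nu0| :> int)].
have [nu /andP[sat_nu sign_nu]|no_change] := pickP sign_change.
  by exists nu, nu0.
suff sign_const :
    {in sat phi, forall nu : {set V}, (-1) ^+ #|nu| = (-1) ^+ #|nu0| :> int}.
  by rewrite (eq_bigr _ sign_const) sumr_const normrMn normrX normrN1 expr1n
    natz eqxx in neq_nsat_eul.
move=> nu sat_nu; apply/eqP.
by move: (no_change nu); rewrite /= sat_nu => /negbFE.
Qed.

Theorem lemma5p11 (k : nat) (hk : (1 <= k)%N) (phi : {set 'I_k.+1} -> bool) :
  (nsat phi)%:Z != `|eul phi| ->
  exists (nu nu' : {set 'I_k.+1}) (mid : seq {set 'I_k.+1}),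
    [/\ nu \in sat phi /\ nu' \in sat phi,
        ((-1) ^+ #|nu| != (-1) ^+ #|nu'| :> int),
        path (@Gedge _) nu (rcons mid nu'),
        uniq (nu :: rcons mid nu') &
        all (fun x => x \notin sat phi) mid].
Proof.
move=> /sat_sign_neq[nu [nu' [sat_nu + +]]].
have /connectP[p pth ->] := connect_Gedge _ nu nu'.
case: (shortenP pth) => q qpth quniq _ sat_last sign_neq.
exact: uniq_path_change_segment qpth quniq sat_nu sat_last sign_neq.
Qed.
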